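(* The general reduction algorithm, started from any nonzero integer quadruple, halts after finitely many steps. Let the reduced quadruple at termination be ordered as $\mathbf a=(a,b,c,d)$ with $a\le b\le c\le d$, and suppose $L(\mathbf a)=a+b+c+d\ge 0$. Then exactly one of the following holds: (i) $a+b+c\ge d>0$; (ii) $a+b+c\le 0<d$. Furthermore, if $\mathbf a=(a,b,c,d)$ (with $a\le b\le c\le d$) is a reduced quadruple with $L(\mathbf a)<0$, then $\mathbf a^*=(-d,-c,-b,-a)$ is a reduced quadruple with $L(\mathbf a^* )>0$.
   Context: Let $\mathbf S_1,\dots,\mathbf S_4$ be the $4\times4$ integer matrices acting on column vectors $(a_1,a_2,a_3,a_4)^T$ by replacing the $i$-th coordinate $a_i$ by $2\sum_{j\ne i}a_j-a_i$ and leaving the other coordinates fixed (e.g. $\mathbf S_4(a,b,c,d)^T=(a,b,c,2(a+b+c)-d)^T$). For $\mathbf v=(a,b,c,d)$ put $|\mathbf v|=|a|+|b|+|c|+|d|$ and $L(\mathbf v)=a+b+c+d$. General reduction algorithm: given an integer quadruple, (1) order it so that $a\le b\le c\le d$; then test in order $i=1,2,3,4$ whether $|\mathbf S_i\mathbf v|<|\mathbf v|$; for the first such $i$, replace $\mathbf v$ by $\mathbf S_i\mathbf v$ and repeat; (2) if no $\mathbf S_i$ strictly decreases $|\mathbf v|$, halt. A quadruple $\mathbf v$ for which no $\mathbf S_i$ strictly decreases $|\mathbf v|$ is called reduced. A reduced quadruple with $L\ge0$ satisfying (i) is called a root quadruple, one satisfying (ii) an exceptional quadruple; a reduced $\mathbf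 a$ with $L(\mathbf a)<0$ is called root (resp. exceptional) iff $\mathbf a^*$ is. *)

From Stdlib Require Import ZArith Lia.
Open Scope Z_scope.

Record quad := Q { q1 : Z; q2 : Z; q3 : Z; q4 : Z }.

Definition qnorm (v : quad) : Z := Z.abs (q1 v) + Z.abs (q2 v) + Z.abs (q3 v) + Z.abs (q4 v).
Definition qL (v : quad) : Z := q1 v + q2 v + q3 v + q4 v.

Definition Smat (i : nat) (v : quad) : quad :=
  let '(Q a b c d) := v in
  match i with
  | 1%nat => Q (2 * (b + c + d) - a) b c d
  | 2%nat => Q a (2 * (a + c + d) - b) c d
  | 3%nat => Q a b (2 * (a + b + d) - c) d
  | 4%nat => Q a b c (2 * (a + b + c) - d)
  | _ => v
  end.

Definition sort4 (v : quad) : quad :=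
  let '(Q x0 x1 x2 x3) := v in
  let '(y0, y1) := (Z.min x0 x1, Z.max x0 x1) in
  let '(y2, y3) := (Z.min x2 x3, Z.max x2 x3) in
  let '(z0, z2) := (Z.min y0 y2, Z.max y0 y2) in
  let '(z1, z3) := (Z.min y1 y3, Z.max y1 y3) in
  let '(w1, w2) := (Z.min z1 z2, Z.max z1 z2) in
  Q z0 w1 w2 z3.

Definition step (v : quad) : option quad :=
  let w := sort4 v in
  if qnorm (Smat 1 w) <? qnorm w then Some (Smat 1 w)
  else if qnorm (Smat 2 w) <? qnorm w then Some (Smat 2 w)
  else if qnorm (Smat 3 w) <? qnorm w then Some (Smat 3 w)
  else if qnorm (Smat 4 w) <? qnorm w then Some (Smat 4 w)
  else None.

Fixpoint run (n : nat) (v : quad) : option quad :=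
  match n with
  | O => Some v
  | S m => match step v with Some w => run m w | None => None end
  end.

Definition reduced (v : quad) : Prop :=
  forall i : nat, (1 <= i <= 4)%nat -> ~ (qnorm (Smat i v) < qnorm v).

Definition qsorted (v : quad) : Prop := q1 v <= q2 v <= q3 v /\ q3 v <= q4 v.

Definition qstar (v : quad) : quad := Q (- q4 v) (- q3 v) (- q2 v) (- q1 v).

(* A step strictly decreases the norm |v|, a nonnegative integer, so the algorithm halts;
   and since each S_i is an involution, a nonzero quadruple never becomes zero.  At a
   halting point a = (a,b,c,d), sorted with L(a) >= 0, the largest entry d is positive,
   and S_4 not decreasing |a| means |2(a+b+c) - d| >= d, i.e. a+b+c >= d or a+b+c <= 0;
   d > 0 makes the two alternatives exclusive.  For the last part, v |-> v^* preserves
   |.|, negates L, and conjugates S_i into S_(5-i), so it preserves reducedness. *)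

From Stdlib Require Import ZArith Lia Zwf Wellfounded.
Open Scope Z_scope.

Lemma min_max_add (f : Z -> Z) x y : f (Z.min x y) + f (Z.max x y) = f x + f y.
Proof.
  destruct (Z.le_ge_cases x y).
  - rewrite Z.min_l, Z.max_r by assumption; reflexivity.
  - rewrite Z.min_r, Z.max_l by assumption; ring.
Qed.

Lemma sort4_add (f : Z -> Z) v :
  f (q1 (sort4 v)) + f (q2 (sort4 v)) + f (q3 (sort4 v)) + f (q4 (sort4 v)) =
  f (q1 v) + f (q2 v) + f (q3 v) + f (q4 v).
Proof.
  destruct v as [a b c d]; cbn.
  pose proof (min_max_add f a b); pose proof (min_max_add f c d).
  pose proof (min_max_add f (Z.min a b) (Z.min c d)).
  pose proof (min_max_add f (Z.max a b) (Z.max c d)).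
  pose proof (min_max_add f (Z.min (Z.max a b) (Z.max c d)) (Z.max (Z.min a b) (Z.min c d))).
  lia.
Qed.

Lemma sort4_qnorm v : qnorm (sort4 v) = qnorm v.
Proof. exact (sort4_add Z.abs v). Qed.

Lemma sort4_sorted v : qsorted (sort4 v).
Proof. destruct v as [a b c d]; unfold sort4, qsorted; cbn; lia. Qed.

Lemma sort4_eq0 v : sort4 v = Q 0 0 0 0 -> v = Q 0 0 0 0.
Proof.
  destruct v as [a b c d]; unfold sort4; cbn; intros E; injection E; intros.
  f_equal; lia.
Qed.

Lemma Smat_involutive i v : Smat i (Smat i v) = v.
Proof.
  destruct v as [a b c d].
  destruct i as [|[|[|[|[|i]]]]]; cbn [Smat]; f_equal; ring.
Qed.

Lemma Smat_eq0 i v : Smat i v = Q 0 0 0 0 -> v = Q 0 0 0 0.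
Proof.
  intros E; rewrite <- (Smat_involutive i v), E.
  destruct i as [|[|[|[|[|i]]]]]; reflexivity.
Qed.

Lemma step_Some v w :
  step v = Some w -> exists i, w = Smat i (sort4 v) /\ qnorm w < qnorm v.
Proof.
  rewrite <- (sort4_qnorm v); unfold step.
  destruct (Z.ltb_spec (qnorm (Smat 1 (sort4 v))) (qnorm (sort4 v)));
    [intros [= <-]; eauto|].
  destruct (Z.ltb_spec (qnorm (Smat 2 (sort4 v))) (qnorm (sort4 v)));
    [intros [= <-]; eauto|].
  destruct (Z.ltb_spec (qnorm (Smat 3 (sort4 v))) (qnorm (sort4 v)));
    [intros [= <-]; eauto|].
  destruct (Z.ltb_spec (qnorm (Smat 4 (sort4 v))) (qnorm (sort4 v)));
    [intros [= <-]; eauto|].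
  discriminate.
Qed.

Lemma step_None v : step v = None -> reduced (sort4 v).
Proof.
  unfold step.
  destruct (Z.ltb_spec (qnorm (Smat 1 (sort4 v))) (qnorm (sort4 v))); [discriminate|].
  destruct (Z.ltb_spec (qnorm (Smat 2 (sort4 v))) (qnorm (sort4 v))); [discriminate|].
  destruct (Z.ltb_spec (qnorm (Smat 3 (sort4 v))) (qnorm (sort4 v))); [discriminate|].
  destruct (Z.ltb_spec (qnorm (Smat 4 (sort4 v))) (qnorm (sort4 v))); [discriminate|].
  intros _ i Hi; destruct i as [|[|[|[|[|i]]]]]; lia.
Qed.

Lemma step_neq0 v w : v <> Q 0 0 0 0 -> step v = Some w -> w <> Q 0 0 0 0.
Proof.
  intros Hv Hstep Hw; destruct (step_Some v w Hstep) as [i [-> _]].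
  exact (Hv (sort4_eq0 v (Smat_eq0 i _ Hw))).
Qed.

Lemma run_halts v : exists n w, run n v = Some w /\ step w = None.
Proof.
  induction v as [v IH] using
    (well_founded_ind (wf_inverse_image _ _ _ qnorm (Zwf_well_founded 0))).
  destruct (step v) as [w|] eqn:Hstep.
  - destruct (step_Some v w Hstep) as [_ [_ Hlt]].
    destruct (IH w) as [n [u Hu]].
    + unfold Zwf; unfold qnorm in *; lia.
    + exists (S n), u; cbn; rewrite Hstep; exact Hu.
  - exists O, v; auto.
Qed.

Lemma run_neq0 n v w : v <> Q 0 0 0 0 -> run n v = Some w -> w <> Q 0 0 0 0.
Proof.
  revert v; induction n as [|n IH]; intros v Hv; cbn.
  - intros [= <-]; exact Hv.
  - destruct (step v) as [u|] eqn:Hstep; [|discriminate].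
    apply IH; exact (step_neq0 v u Hv Hstep).
Qed.

Lemma sorted_qL_nonneg_q4_pos a :
  qsorted a -> 0 <= qL a -> a <> Q 0 0 0 0 -> 0 < q4 a.
Proof.
  destruct a as [a b c d]; unfold qsorted, qL; cbn; intros Hs HL Ha.
  destruct (Z_lt_le_dec 0 d) as [|Hd]; [assumption|].
  exfalso; apply Ha; f_equal; lia.
Qed.

Lemma Smat4_not_decreasing a b c d :
  0 < d -> qnorm (Q a b c d) <= qnorm (Smat 4 (Q a b c d)) ->
  a + b + c >= d \/ a + b + c <= 0.
Proof. unfold qnorm; cbn [Smat q1 q2 q3 q4]; lia. Qed.

Lemma qnorm_qstar v : qnorm (qstar v) = qnorm v.
Proof. destruct v as [a b c d]; unfold qnorm; cbn; rewrite !Z.abs_opp; ring. Qed.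

Lemma qL_qstar v : qL (qstar v) = - qL v.
Proof. destruct v as [a b c d]; unfold qL; cbn; ring. Qed.

Lemma Smat_qstar i v :
  (1 <= i <= 4)%nat -> Smat i (qstar v) = qstar (Smat (5 - i) v).
Proof.
  intros Hi; destruct v as [a b c d].
  destruct i as [|[|[|[|[|i]]]]]; try lia; unfold qstar; cbn [Nat.sub Smat q1 q2 q3 q4]; f_equal; ring.
Qed.

Lemma reduced_qstar v : reduced v -> reduced (qstar v).
Proof.
  intros Hv i Hi.
  rewrite (Smat_qstar i v Hi), !qnorm_qstar.
  apply Hv; lia.
Qed.

Theorem theorem3p1 :
  (forall v : quad, v <> Q 0 0 0 0 ->
     (exists (n : nat) (w : quad), run n v = Some w /\ step w = None) /\
     (forall (n : nat) (w : quad), run n v = Some w -> step w = None ->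
        let a := sort4 w in
        0 <= qL a ->
        ((q1 a + q2 a + q3 a >= q4 a /\ q4 a > 0) /\ ~ (q1 a + q2 a + q3 a <= 0 /\ 0 < q4 a)) \/
        (~ (q1 a + q2 a + q3 a >= q4 a /\ q4 a > 0) /\ (q1 a + q2 a + q3 a <= 0 /\ 0 < q4 a)))) /\
  (forall a : quad, qsorted a -> reduced a -> qL a < 0 ->
     reduced (qstar a) /\ qL (qstar a) > 0).
Proof.
  split.
  - intros v Hv; split; [apply run_halts|].
    intros n w Hrun Hstep a HL.
    assert (Hd : 0 < q4 a).
    { apply sorted_qL_nonneg_q4_pos; [apply sort4_sorted | exact HL |].
      intros Ha; exact (run_neq0 n v w Hv Hrun (sort4_eq0 w Ha)). }
    assert (H4 : ~ qnorm (Smat 4 a) < qnorm a) by (apply (step_None w Hstep); lia).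
    subst a; destruct (sort4 w) as [a b c d]; cbn [q1 q2 q3 q4] in *.
    destruct (Smat4_not_decreasing a b c d Hd); lia.
  - intros a _ Hred HL; split.
    + exact (reduced_qstar a Hred).
    + rewrite qL_qstar; lia.
Qed.
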